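(* Let $K \colon \mathbb{Z}^2 \to \mathbb{R}$ be a finitely supported convolution kernel, $f(\bm{X}) = \bm{X} \ast K$ the corresponding convolution on bounded fields $\bm{X} \colon \mathbb{Z}^2 \to \mathbb{R}$, and let $\sigma \colon \mathbb{R} \to \mathbb{R}$ be piecewise differentiable, applied pointwise to fields. Suppose the composition $\varphi = \sigma \circ f$ is equivariant with respect to arbitrary uniform motion, i.e. $\varphi(\bm{X} + \bm{C}) = \varphi(\bm{X}) + \bm{C}$ for every field $\bm{X}$ and every constant field $\bm{C}$. Then $\varphi$ is affine of the form $\varphi(\bm{X}) = \bm{X} \ast K' + b$ for some real number $b$ and some finitely supported kernel $K'$ with $\sum_v K'(v) = 1$.
   Context: Convolution: $(\bm{X}\ast K)(p) = \sum_{q \in \mathbb{Z}^2} \bm{X}(p+q)K(q)$. A constant field $\bm{C}$ takes the same real value at every point of $\mathbb{Z}^2$; adding $b$ to a field means adding the constant field with value $b$. *)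

From Stdlib Require Import Reals ZArith List.
Open Scope R_scope.

Definition pt := (Z * Z)%type.
Definition field := pt -> R.
Definition padd (p q : pt) : pt := ((fst p + fst q)%Z, (snd p + snd q)%Z).

Definition lsum (l : list pt) (F : pt -> R) : R :=
  fold_right (fun q acc => F q + acc) 0 l.

Definition supported_in (l : list pt) (K : field) : Prop :=
  NoDup l /\ forall q, ~ In q l -> K q = 0.

(* Convolution (X * K)(p) = sum_q X(p+q) K(q), computed over a support list l of K
   (for K supported in l this equals the full sum over Z^2). *)
Definition conv (l : list pt) (X K : field) (p : pt) : R :=
  lsum l (fun q => X (padd p q) * K q).

Definition bounded_field (X : field) : Prop :=
  exists M, forall p, Rabs (X p) <= M.

Definition const_field (c : R) : field := fun _ => c.

Definition fadd (X Y : field) : field := fun p => X p + Y p.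

(* Piecewise differentiable: differentiable outside a locally finite set of
   breakpoints. *)
Definition piecewise_differentiable (s : R -> R) : Prop :=
  exists D : R -> Prop,
    (forall a b, exists l : list R, forall x, D x -> a <= x <= b -> In x l) /\
    (forall x, ~ D x -> exists d, derivable_pt_lim s x d).

(* Feeding the zero field with the constant shifts t gives sigma (t * S) = sigma 0 + t,
   where S is the total mass of K. Hence S <> 0 and sigma is the affine map
   x |-> sigma 0 + x / S, so sigma o f is convolution with K / S plus sigma 0. *)

From Stdlib Require Import Reals ZArith List Lra.
Open Scope R_scope.

Lemma lsum_ext (l : list pt) (F G : pt -> R) :
  (forall q, F q = G q) -> lsum l F = lsum l G.
Proof.
  intros hFG; unfold lsum; induction l as [|q l IH]; simpl; [reflexivity|].
  now rewrite IH, hFG.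
Qed.

Lemma lsum_plus (l : list pt) (F G : pt -> R) :
  lsum l (fun q => F q + G q) = lsum l F + lsum l G.
Proof.
  unfold lsum; induction l as [|q l IH]; simpl; [ring|].
  rewrite IH; ring.
Qed.

Lemma lsum_mult_r (l : list pt) (F : pt -> R) (s : R) :
  lsum l (fun q => F q * s) = lsum l F * s.
Proof.
  unfold lsum; induction l as [|q l IH]; simpl; [ring|].
  rewrite IH; ring.
Qed.

Lemma lsum_mult_l (l : list pt) (F : pt -> R) (s : R) :
  lsum l (fun q => s * F q) = s * lsum l F.
Proof.
  rewrite (lsum_ext l _ (fun q => F q * s)) by (intro; ring).
  rewrite lsum_mult_r; ring.
Qed.

Lemma conv_const (l : list pt) (K : field) (c : R) (p : pt) :
  conv l (const_field c) K p = c * lsum l K.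
Proof. unfold conv, const_field; apply lsum_mult_l. Qed.

Lemma conv_fadd (l : list pt) (X Y K : field) (p : pt) :
  conv l (fadd X Y) K p = conv l X K p + conv l Y K p.
Proof.
  unfold conv; rewrite <- lsum_plus; apply lsum_ext.
  intro q; unfold fadd; ring.
Qed.

Lemma conv_kernel_mult_r (l : list pt) (X K : field) (s : R) (p : pt) :
  conv l X (fun q => K q * s) p = conv l X K p * s.
Proof.
  unfold conv; rewrite <- lsum_mult_r; apply lsum_ext.
  intro q; ring.
Qed.

Lemma supported_in_mult_r (l : list pt) (K : field) (s : R) :
  supported_in l K -> supported_in l (fun q => K q * s).
Proof.
  intros [hnd hz]; split; [exact hnd|].
  intros q hq; rewrite hz by exact hq; ring.
Qed.

Lemma bounded_const (c : R) : bounded_field (const_field c).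
Proof. exists (Rabs c); intros; unfold const_field; lra. Qed.

Section ShiftEquivariantScalar.

Variables (sigma : R -> R) (S : R).
Hypothesis sigma_shift : forall t, sigma (t * S) = sigma 0 + t.

Lemma shift_scale_neq0 : S <> 0.
Proof.
  intro hS; pose proof (sigma_shift 1) as h.
  rewrite hS, Rmult_0_r in h; lra.
Qed.

Lemma shift_equivariant_affine (x : R) : sigma x = sigma 0 + x / S.
Proof.
  pose proof shift_scale_neq0 as hS.
  replace x with ((x / S) * S) at 1 by (field; exact hS).
  apply sigma_shift.
Qed.

End ShiftEquivariantScalar.

Theorem mainTheorem6
  (K : field) (l : list pt) (hK : supported_in l K)
  (sigma : R -> R) (hs : piecewise_differentiable sigma)
  (hequiv : forall (X : field) (c : R), bounded_field X ->
     forall p, sigma (conv l (fadd X (const_field c)) K p)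
               = sigma (conv l X K p) + const_field c p) :
  exists (b : R) (K' : field) (l' : list pt),
    supported_in l' K' /\ lsum l' K' = 1 /\
    forall (X : field), bounded_field X ->
      forall p, sigma (conv l X K p) = conv l' X K' p + b.
Proof.
  set (S := lsum l K).
  assert (sigma_shift : forall t, sigma (t * S) = sigma 0 + t).
  { intro t.
    pose proof (hequiv (const_field 0) t (bounded_const 0) (0%Z, 0%Z)) as h.
    rewrite conv_fadd, !conv_const in h; unfold const_field in h; fold S in h.
    now rewrite Rmult_0_l, Rplus_0_l in h. }
  pose proof (shift_scale_neq0 sigma S sigma_shift) as hS.
  exists (sigma 0), (fun q => K q * / S), l.
  split; [now apply supported_in_mult_r|].
  split; [rewrite lsum_mult_r; fold S; field; exact hS|].
  intros X _ p.
  rewrite conv_kernel_mult_r, (shift_equivariant_affine sigma S sigma_shift).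
  unfold Rdiv; ring.
Qed.
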